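(* Let $\Gamma=\sum_{j=1}^k w_j\delta_{\mu_j}$ be a $k$-atomic distribution on $\mathbb R^d$, and let $\Sigma=\mathbb E_{U\sim\Gamma}[UU^\top]=\sum_{j=1}^k w_j\mu_j\mu_j^\top$ with eigenvalues $\lambda_1\ge\dots\ge\lambda_d$. Let $\Sigma'$ be any symmetric $d\times d$ matrix and $\Pi'_r$ the orthogonal projection matrix onto the span of the top $r$ eigenvectors of $\Sigma'$. Then $$W_2^2(\Gamma,\Gamma_{\Pi'_r})\le k\big(\lambda_{r+1}+2\|\Sigma-\Sigma'\|_2\big).$$
   Context: For a $d\times d$ matrix $A$, $\Gamma_A$ denotes the law of $AU$ with $U\sim\Gamma$. $\|\cdot\|_2$ of a matrix is the spectral (operator) norm. $W_2(\Gamma,\Gamma')=(\inf\mathbb E\|U-U'\|_2^2)^{1/2}$ over couplings. Set $\lambda_{d+1}=0$ if $r=d$. *)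

From HB Require Import structures.
From mathcomp Require Import all_boot all_order all_algebra.
Set Implicit Arguments. Unset Strict Implicit. Unset Printing Implicit Defensive.
Import Order.TTheory GRing.Theory Num.Theory.
Local Open Scope ring_scope.

Definition vnorm (R : rcfType) (d : nat) (v : 'cV[R]_d) : R :=
  Num.sqrt (\sum_(i < d) (v i 0) ^+ 2).

Definition is_lub (R : realFieldType) (S : R -> Prop) (s : R) : Prop :=
  (forall x, S x -> x <= s) /\ (forall b, (forall x, S x -> x <= b) -> s <= b).
Definition is_glb (R : realFieldType) (S : R -> Prop) (s : R) : Prop :=
  (forall x, S x -> s <= x) /\ (forall b, (forall x, S x -> b <= x) -> b <= s).

Definition spectral_norm_is (R : rcfType) (d : nat) (A : 'M[R]_d) (s : R) : Prop :=
  is_lub (fun y => exists v : 'cV[R]_d, vnorm v = 1 /\ y = vnorm (A *m v)) s.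

(* A finitely supported distribution sum_i w i delta_(a i) on R^d is given by
   weights w : 'I_k -> R and atoms a : 'I_k -> 'cV_d (atoms may repeat).
   A coupling of sum_i w1 i delta_(a i) and sum_j w2 j delta_(b j) is a finitely
   supported measure on R^d x R^d (supported on supp x supp), written as a
   nonnegative mass p i j on the point (a i, b j), whose marginals are the two
   measures (checked pointwise on each point x of R^d). *)
Definition is_coupling (R : rcfType) (d k1 k2 : nat)
  (w1 : 'I_k1 -> R) (a : 'I_k1 -> 'cV[R]_d)
  (w2 : 'I_k2 -> R) (b : 'I_k2 -> 'cV[R]_d)
  (p : 'I_k1 -> 'I_k2 -> R) : Prop :=
  (forall i j, 0 <= p i j) /\
  (forall x : 'cV[R]_d,
      \sum_(i < k1 | a i == x) \sum_(j < k2) p i j = \sum_(i < k1 | a i == x) w1 i) /\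
  (forall y : 'cV[R]_d,
      \sum_(j < k2 | b j == y) \sum_(i < k1) p i j = \sum_(j < k2 | b j == y) w2 j).

Definition W2sq_is (R : rcfType) (d k1 k2 : nat)
  (w1 : 'I_k1 -> R) (a : 'I_k1 -> 'cV[R]_d)
  (w2 : 'I_k2 -> R) (b : 'I_k2 -> 'cV[R]_d) (m : R) : Prop :=
  is_glb (fun c => exists p, is_coupling w1 a w2 b p /\
            c = \sum_(i < k1) \sum_(j < k2) p i j * vnorm (a i - b j) ^+ 2) m.

(* atoms of Gamma_A = law of A U, U ~ sum_j w j delta_(mu j): same weights,
   atoms A mu_j. *)
Definition push_atoms (R : rcfType) (d k : nat) (A : 'M[R]_d)
  (mu : 'I_k -> 'cV[R]_d) : 'I_k -> 'cV[R]_d := fun j => A *m mu j.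

Definition second_moment (R : rcfType) (d k : nat) (w : 'I_k -> R)
  (mu : 'I_k -> 'cV[R]_d) : 'M[R]_d :=
  \sum_(j < k) w j *: (mu j *m (mu j)^T).

(* lam 0 >= lam 1 >= ... >= lam (d-1) are the eigenvalues of A with multiplicity
   (lam i is lambda_(i+1) of the paper). *)
Definition eigenvalues_sorted (R : rcfType) (d : nat) (A : 'M[R]_d)
  (lam : nat -> R) : Prop :=
  char_poly A = \prod_(i < d) ('X - (lam i)%:P) /\
  (forall i j : nat, (i <= j)%N -> (j < d)%N -> lam j <= lam i).

(* lambda_(r+1), with the convention lambda_(d+1) = 0 *)
Definition lam_next (R : rcfType) (d : nat) (lam : nat -> R) (r : nat) : R :=
  if (r < d)%N then lam r else 0.

Definition top_eig_proj (R : rcfType) (d : nat) (A : 'M[R]_d) (r : nat)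
  (P : 'M[R]_d) : Prop :=
  exists (Q : 'M[R]_d) (lam : nat -> R),
    Q^T *m Q = 1%:M /\
    (forall i : 'I_d, A *m col i Q = lam i *: col i Q) /\
    (forall i j : 'I_d, (i <= j)%N -> lam j <= lam i) /\
    P = \sum_(i < d | (i < r)%N) col i Q *m (col i Q)^T.

From HB Require Import structures.
From mathcomp Require Import all_boot all_order all_algebra.
From mathcomp Require Import complex zify ring lra.
Set Implicit Arguments. Unset Strict Implicit. Unset Printing Implicit Defensive.
Import Order.TTheory GRing.Theory Num.Theory.
Local Open Scope ring_scope.

(* Couple every atom [mu j] with its own image [P mu j]; this bounds W_2^2 by
   sum_j w_j |y_j|^2 with y_j = (1 - P) mu_j.  The residual y_j is orthogonal to
   the top r eigenvectors of Sigma', so y_j' Sigma' y_j <= lambda'_(r+1) |y_j|^2,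
   while y_j' Sigma y_j >= w_j <y_j, mu_j>^2 = w_j |y_j|^4.  Replacing Sigma by
   Sigma' costs s |y_j|^2 with s = ||Sigma - Sigma'||, and Weyl's inequality
   lambda'_(r+1) <= lambda_(r+1) + s yields w_j |y_j|^2 <= lambda_(r+1) + 2 s for
   each of the k atoms.
   Weyl's inequality follows from a Courant-Fischer lower bound, which is a
   form of Sylvester's law of inertia: on the kernel of q(B), with q the product
   of the factors X - lambda_i for the eigenvalues lambda_i < m, the quadratic
   form of B stays below m; this is checked in an orthonormal eigenbasis given
   by the complex spectral theorem, and the kernel has dimension at least
   n - #{i | lambda_i >= m}. *)

Section Dot.
Variables (R : rcfType) (d : nat).
Implicit Types (u v : 'cV[R]_d) (E : 'M[R]_d).

Definition dot u v : R := (u^T *m v) 0 0.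

Lemma dotE u v : dot u v = \sum_i u i 0 * v i 0.
Proof. by rewrite /dot mxE; apply: eq_bigr => i _; rewrite mxE. Qed.

Lemma dotC u v : dot u v = dot v u.
Proof. by rewrite !dotE; apply: eq_bigr => i _; rewrite mulrC. Qed.

Lemma dot_ge0 u : 0 <= dot u u.
Proof. by rewrite dotE sumr_ge0 // => i _; rewrite -expr2 sqr_ge0. Qed.

Lemma dotZl a u v : dot (a *: u) v = a * dot u v.
Proof. by rewrite !dotE mulr_sumr; apply: eq_bigr => i _; rewrite mxE mulrA. Qed.

Lemma dotZr a u v : dot u (a *: v) = a * dot u v.
Proof. by rewrite dotC dotZl dotC. Qed.

Lemma dotBr u v v' : dot u (v - v') = dot u v - dot u v'.
Proof. by rewrite !dotE -sumrB; apply: eq_bigr => i _; rewrite !mxE mulrBr. Qed.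

Lemma dot_eq0 u : (dot u u == 0) = (u == 0).
Proof.
apply/idP/eqP => [|->]; last by rewrite dotE big1 // => i _; rewrite mxE mul0r.
rewrite dotE psumr_eq0 => [/allP u0|i _]; last by rewrite -expr2 sqr_ge0.
apply/matrixP => i j; rewrite ord1 mxE.
by have /= := u0 i (mem_index_enum _); rewrite mulf_eq0 orbb => /eqP.
Qed.

Lemma vnorm_sqr u : vnorm u ^+ 2 = dot u u.
Proof.
rewrite /vnorm sqr_sqrtr; last by rewrite sumr_ge0 // => i _; rewrite sqr_ge0.
by rewrite dotE; apply: eq_bigr => i _; rewrite expr2.
Qed.

Lemma vnorm_ge0 u : 0 <= vnorm u.
Proof. exact: sqrtr_ge0. Qed.

Lemma vnormE u : vnorm u = Num.sqrt (dot u u).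
Proof. by rewrite -vnorm_sqr sqrtr_sqr ger0_norm ?vnorm_ge0. Qed.

Lemma vnormZ a u : vnorm (a *: u) = `|a| * vnorm u.
Proof. by rewrite !vnormE dotZl dotZr mulrA -expr2 sqrtrM ?sqr_ge0 // sqrtr_sqr. Qed.

Lemma vnorm_eq0 u : (vnorm u == 0) = (u == 0).
Proof. by rewrite vnormE sqrtr_eq0 le_eqVlt ltNge dot_ge0 orbF dot_eq0. Qed.

Lemma dot_sqr_le u v : dot u v ^+ 2 <= dot u u * dot v v.
Proof.
have [->|u0] := eqVneq u 0; first by rewrite /dot trmx0 !mul0mx mxE expr0n mul0r.
have u_gt0 : 0 < dot u u by rewrite lt_def dot_eq0 u0 dot_ge0.
(* expand the squared norm of [dot u v *: u - dot u u *: v] *)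
have expand : \sum_i (dot u v * u i 0 - dot u u * v i 0) ^+ 2 =
    dot u v ^+ 2 * (\sum_i u i 0 * u i 0) - 2 * dot u u * dot u v * (\sum_i u i 0 * v i 0)
    + dot u u ^+ 2 * (\sum_i v i 0 * v i 0).
  by rewrite !mulr_sumr -sumrB -big_split /=; apply: eq_bigr => i _; ring.
have : 0 <= \sum_i (dot u v * u i 0 - dot u u * v i 0) ^+ 2.
  by rewrite sumr_ge0 // => i _; rewrite sqr_ge0.
rewrite expand -!dotE => ge0; rewrite -subr_ge0 -(pmulr_rge0 _ u_gt0).
suff -> : dot u u * (dot u u * dot v v - dot u v ^+ 2) =
  dot u v ^+ 2 * dot u u - 2 * dot u u * dot u v * dot u v + dot u u ^+ 2 * dot v v by [].
ring.
Qed.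

Lemma normr_dot_le u v : `|dot u v| <= vnorm u * vnorm v.
Proof.
rewrite !vnormE -sqrtrM ?dot_ge0 // -sqrtr_sqr ler_sqrt ?mulr_ge0 ?dot_ge0 //.
exact: dot_sqr_le.
Qed.

Lemma spectral_norm_mulmx_le E s u :
  spectral_norm_is E s -> vnorm (E *m u) <= s * vnorm u.
Proof.
move=> sE; have [u0|u_neq0] := eqVneq u 0.
  by rewrite u0 mulmx0 (eqP (_ : vnorm 0 == 0)) ?mulr0 // vnorm_eq0.
have u_gt0 : 0 < vnorm u by rewrite lt_def vnorm_eq0 u_neq0 vnorm_ge0.
have : vnorm (E *m ((vnorm u)^-1 *: u)) <= s.
  apply: sE.1; exists ((vnorm u)^-1 *: u); split => //.
  by rewrite vnormZ ger0_norm ?invr_ge0 ?vnorm_ge0 // mulVf ?gt_eqF.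
by rewrite -scalemxAr vnormZ ger0_norm ?invr_ge0 ?vnorm_ge0 // mulrC ler_pdivrMr.
Qed.

Lemma normr_dot_mulmx_le E s u :
  spectral_norm_is E s -> `|dot u (E *m u)| <= s * dot u u.
Proof.
move=> sE; apply: le_trans (normr_dot_le _ _) _.
rewrite -vnorm_sqr expr2 mulrA [s * _]mulrC -mulrA ler_wpM2l ?vnorm_ge0 //.
exact: spectral_norm_mulmx_le.
Qed.

End Dot.

Lemma spectral_norm_ge0 (R : rcfType) d (E : 'M[R]_d) s : spectral_norm_is E s -> 0 <= s.
Proof.
case: d E => [|d'] E [s_ub s_lub].
  (* there is no unit vector in R^0, so nothing can be a least upper bound *)
  have : s <= s - 1.
    apply: s_lub => y [v [v1 _]]; move: v1.
    by rewrite /vnorm big_ord0 sqrtr0 => /esym/eqP; rewrite oner_eq0.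
  by rewrite -subr_ge0 addrAC subrr add0r oppr_ge0 ler10.
pose e : 'cV[R]_d'.+1 := delta_mx 0 0.
apply: le_trans (s_ub (vnorm (E *m e)) _); first exact: vnorm_ge0.
exists e; split => //; rewrite /vnorm (bigD1 0) //= big1 => [|i i0].
  by rewrite !mxE !eqxx expr1n addr0 sqrtr1.
by rewrite !mxE (negbTE i0) expr0n.
Qed.

Lemma char_poly_uconj (F : fieldType) n (P A : 'M[F]_n) :
  P \in unitmx -> char_poly (invmx P *m A *m P) = char_poly A.
Proof.
move=> Pu; rewrite /char_poly /char_poly_mx !map_mxM.
set Ip := map_mx polyC (invmx P); set Pp := map_mx polyC P.
have IPp : Ip *m Pp = 1%:M by rewrite -map_mxM mulVmx // map_mx1.
have {1}-> : ('X%:M : 'M_n) = Ip *m 'X%:M *m Pp.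
  by rewrite scalar_mxC -mulmxA IPp mulmx1.
by rewrite -mulmxBl -mulmxBr !det_mulmx mulrAC -det_mulmx IPp det1 mul1r.
Qed.

Lemma mxrank_sum_le (F : fieldType) m n I (r : seq I) (P : pred I)
    (G : I -> 'M[F]_(m, n)) :
  (\rank (\sum_(i <- r | P i) G i)%R <= \sum_(i <- r | P i) \rank (G i))%N.
Proof.
elim/big_rec2: _ => [|i y A _ IH]; first by rewrite mxrank0.
by apply: leq_trans (mxrank_add _ _) _; rewrite leq_add2l.
Qed.

Lemma mxrank_diag_le (F : fieldType) n (v : 'rV[F]_n) :
  (\rank (diag_mx v) <= #|[pred i | v 0%R i != 0%R]|)%N.
Proof.
rewrite diag_mx_sum_delta (bigID [pred i | v 0%R i != 0%R]) /=.
rewrite [X in (_ + X)%R]big1 ?addr0 => [|i /negPn/eqP ->]; last by rewrite scale0r.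
rewrite -sum1_card; apply: leq_trans (mxrank_sum_le _ _ _) _.
by apply: leq_sum => i nz; rewrite mxrank_scale_nz // mxrank_delta.
Qed.

Lemma card_ord_lt_le d r : (#|[pred i : 'I_d | i < r]| <= r)%N.
Proof.
case: r => [|r]; first by rewrite leqn0; apply/eqP/eq_card0 => i; rewrite !inE.
rewrite -[X in (_ <= X)%N]card_ord.
apply: (leq_card_in (fun i : 'I_d => inord i : 'I_r.+1)) => i j ir jr /(congr1 val).
by rewrite /= !inordK //; apply: val_inj.
Qed.

Lemma pid_mx_diag (R : pzRingType) n r :
  (pid_mx r : 'M[R]_n) = diag_mx (\row_i (i < r)%:R).
Proof.
apply/matrixP => i j; rewrite !mxE; have [<-|ij] := eqVneq i j; first by rewrite eqxx.
by rewrite (_ : (i == j :> nat) = false) ?mulr0n //; apply/negbTE.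
Qed.

Lemma copid_mx_diag (R : pzRingType) n r :
  (copid_mx r : 'M[R]_n) = diag_mx (\row_i (r <= i)%:R).
Proof.
apply/matrixP => i j; rewrite /copid_mx pid_mx_diag !mxE.
by case: (i == j); case: ltnP; rewrite ?subrr ?subr0.
Qed.

Section RealSymmetricSpectrum.
Variables (R : rcfType) (n : nat) (B : 'M[R]_n.+1) (lam : nat -> R).
Hypotheses (B_sym : B^T = B)
  (charB : char_poly B = \prod_(i < n.+1) ('X - (lam i)%:P)).

Local Open Scope sesquilinear_scope.
Local Notation toC := (real_complex R).
Local Notation BC := (map_mx toC B).
Local Notation P := (spectralmx BC).
Local Notation D := (spectral_diag BC).

Lemma conj_real_complex (x : R) : (toC x)^* = toC x.
Proof. by rewrite conj_Creal // complex_real. Qed.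

Lemma spectral_decomposition_toC : BC = invmx P *m diag_mx D *m P.
Proof.
apply/orthomx_spectralP/hermitian_normalmx/is_hermitianmxP.
rewrite expr0 scale1r map_trmx B_sym.
by apply/matrixP => i j; rewrite !mxE conj_real_complex.
Qed.

Lemma perm_spectral_diag_eigenvalues :
  perm_eq [seq D 0 i | i <- enum 'I_n.+1]
          [seq toC (lam i) | i : 'I_n.+1 <- enum 'I_n.+1].
Proof.
apply: prod_XsubC_eq; rewrite !big_map.
transitivity (char_poly (diag_mx D)).
  rewrite char_poly_trig ?diag_mx_is_trig //.
  by apply: eq_bigr => i _; rewrite mxE eqxx mulr1n.
rewrite -(char_poly_uconj _ (spectral_unit BC)) -spectral_decomposition_toC -map_char_poly.
rewrite charB rmorph_prod; apply: eq_bigr => i _.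
by rewrite rmorphB /= map_polyX map_polyC.
Qed.

Lemma mxrank_kermxpoly_ge (q : {poly R}) :
  (n.+1 - #|[pred i : 'I_n.+1 | q.[lam i] != 0%R]| <= \rank (kermxpoly B q))%N.
Proof.
rewrite -(mxrank_map toC) map_kermxpoly /kermxpoly mxrank_ker leq_sub2l //.
rewrite spectral_decomposition_toC horner_mx_uconjC ?spectral_unit //.
apply: leq_trans (mxrankM_maxl _ _) _; apply: leq_trans (mxrankM_maxr _ _) _.
rewrite horner_mx_diag; apply: leq_trans (mxrank_diag_le _) _.
have := permP perm_spectral_diag_eigenvalues (fun z => (map_poly toC q).[z] != 0).
rewrite !count_map -!size_filter -!cardE => cntE.
rewrite (eq_card (B := fun i => (map_poly toC q).[D 0 i] != 0)) => [|i]; last first.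
  by rewrite !inE mxE.
rewrite cntE; apply/eq_leq/eq_card => i.
by rewrite unfold_in /= (horner_map toC) fmorph_eq0.
Qed.

Local Notation coords x := (map_mx toC x *m invmx P).

Lemma coordsK (x : 'rV[R]_n.+1) : map_mx toC x = coords x *m P.
Proof. by rewrite mulmxKV // spectral_unit. Qed.

Lemma trmxC_toC p q (x : 'M[R]_(p, q)) : (map_mx toC x)^t* = map_mx toC x^T.
Proof. by apply/matrixP => i j; rewrite !mxE conj_real_complex. Qed.

Lemma trmxC_coords (x : 'rV[R]_n.+1) :
  (map_mx toC x)^t* = invmx P *m (coords x)^t*.
Proof.
by rewrite {1}coordsK trmx_mul map_mxM invmx_unitary ?spectral_unitarymx.
Qed.

Lemma form_coords_toC (x : 'rV[R]_n.+1) :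
  toC ((x *m B *m x^T) 0 0) = \sum_i D 0 i * (coords x 0 i * (coords x 0 i)^*).
Proof.
have -> : toC ((x *m B *m x^T) 0 0) = (map_mx toC x *m BC *m (map_mx toC x)^t*) 0 0.
  by rewrite trmxC_toC -!map_mxM [RHS]mxE.
rewrite trmxC_coords {1}coordsK [in X in _ *m X *m _]spectral_decomposition_toC !mulmxA.
rewrite !(mulmxK (spectral_unit BC)) mxE; apply: eq_bigr => i _.
by rewrite mul_mx_diag !mxE mulrCA mulrA.
Qed.

Lemma norm_coords_toC (x : 'rV[R]_n.+1) :
  toC ((x *m x^T) 0 0) = \sum_i coords x 0 i * (coords x 0 i)^*.
Proof.
have -> : toC ((x *m x^T) 0 0) = (map_mx toC x *m (map_mx toC x)^t*) 0 0.
  by rewrite trmxC_toC -!map_mxM [RHS]mxE.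
rewrite trmxC_coords {1}coordsK mulmxA (mulmxK (spectral_unit BC)) mxE.
by apply: eq_bigr => i _; rewrite !mxE.
Qed.

Lemma spectral_diag_eigenvalue i : exists j : 'I_n.+1, D 0 i = toC (lam j).
Proof.
have : D 0 i \in [seq D 0 i | i <- enum 'I_n.+1] by apply: map_f; rewrite mem_enum.
by rewrite (perm_mem perm_spectral_diag_eigenvalues) => /mapP [j _ ->]; exists j.
Qed.

Lemma coords_kermxpoly (q : {poly R}) (x : 'rV[R]_n.+1) i :
  (x <= kermxpoly B q)%MS -> coords x 0 i * (map_poly toC q).[D 0 i] = 0.
Proof.
move=> xK; have : map_mx toC x *m horner_mx BC (map_poly toC q) = 0.
  by rewrite -map_horner_mx -map_mxM (sub_kermxP xK) map_mx0.
rewrite {1}spectral_decomposition_toC horner_mx_uconjC ?spectral_unit //.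
rewrite horner_mx_diag coordsK.
rewrite !mulmxA (mulmxK (spectral_unit BC)) => /(congr1 (mulmx^~ (invmx P))).
rewrite (mulmxK (spectral_unit BC)) mul0mx => /matrixP /(_ 0 i).
by rewrite mul_mx_diag !mxE.
Qed.

Lemma kermxpoly_form_lt (q : {poly R}) (m : R) (x : 'rV[R]_n.+1) :
  (forall i : 'I_n.+1, root q (lam i) -> lam i < m) ->
  (x <= kermxpoly B q)%MS -> x != 0 ->
  (x *m B *m x^T) 0 0 < m * (x *m x^T) 0 0.
Proof.
move=> root_lt xK xn0; set c := coords x.
have c_lt i : c 0 i != 0 -> D 0 i < toC m.
  move=> ci; have /eqP := coords_kermxpoly i xK; rewrite mulf_eq0 (negbTE ci) /=.
  have [j ->] := spectral_diag_eigenvalue i.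
  by rewrite (horner_map toC) fmorph_eq0 ltcR => /root_lt.
have [i0 ci0] : exists i0, c 0 i0 != 0.
  apply/existsP; apply: contraR xn0; rewrite negb_exists => /forallP c0.
  have c_eq0 : c = 0.
    by apply/rowP => i; move: (c0 i); rewrite negbK [RHS]mxE => /eqP.
  by rewrite -(map_mx_eq0 toC) coordsK -/c c_eq0 mul0mx.
rewrite -ltcR rmorphM /= form_coords_toC norm_coords_toC -/c mulr_sumr.
rewrite (bigD1 i0) //= [X in _ < X](bigD1 i0) //=.
apply: ltr_leD; first by rewrite ltr_pM2r ?mul_conjC_gt0 // c_lt.
apply: ler_sum => i _; have [->|ci] := eqVneq (c 0 i) 0; first by rewrite !mul0r !mulr0.
by rewrite ler_wpM2r ?mul_conjC_ge0 // ltW // c_lt.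
Qed.

End RealSymmetricSpectrum.

Lemma mxrank_le_card_eigenvalues_ge (R : rcfType) n (B : 'M[R]_n) (lam : nat -> R)
    (m : R) p (S : 'M[R]_(p, n)) :
  B^T = B -> char_poly B = \prod_(i < n) ('X - (lam i)%:P) ->
  (forall u : 'cV_n, (u^T <= S)%MS -> m * dot u u <= dot u (B *m u)) ->
  (\rank S <= #|[pred i : 'I_n | (m <= lam i)%R]|)%N.
Proof.
case: n => [|n] in B S *; first by rewrite (leq_trans (rank_leq_col S)).
move=> B_sym charB S_ge.
pose q := \prod_(i < n.+1 | lam i < m) ('X - (lam i)%:P).
have q_root (i : 'I_n.+1) : root q (lam i) -> lam i < m.
  rewrite /root horner_prod => /prodf_eq0 [j lt_jm].
  by rewrite !hornerE subr_eq0 => /eqP ->.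
have q_card : (#|[pred i : 'I_n.+1 | q.[lam i] != 0%R]|
                 <= #|[pred i : 'I_n.+1 | (m <= lam i)%R]|)%N.
  apply/subset_leq_card/subsetP => i; rewrite !inE; apply: contraR; rewrite -ltNge => lt_im.
  by rewrite horner_prod (bigD1 i) //= !hornerE subrr mul0r.
have capS0 : (S :&: kermxpoly B q)%MS = 0.
  apply/eqP/rowV0P => v v_cap; apply/eqP; apply: contraT => v0.
  have vK := submx_trans v_cap (capmxSr _ _).
  have vS := submx_trans v_cap (capmxSl _ _).
  have := S_ge v^T; rewrite /dot trmxK mulmxA => /(_ vS).
  by rewrite leNgt (kermxpoly_form_lt B_sym charB q_root vK v0).
have := mxrank_sum_cap S (kermxpoly B q); rewrite capS0 mxrank0.
have := rank_leq_col (S + kermxpoly B q)%MS; have := mxrank_kermxpoly_ge B_sym charB q.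
have := max_card [pred i : 'I_n.+1 | q.[lam i] != 0%R]; rewrite card_ord.
move: q_card; set c := #|_|; lia.
Qed.

Lemma courant_fischer_lb (R : rcfType) n (B : 'M[R]_n) (lam : nat -> R) (m : R)
    p (S : 'M[R]_(p, n)) r :
  B^T = B -> eigenvalues_sorted B lam -> (r < \rank S)%N ->
  (forall u : 'cV_n, (u^T <= S)%MS -> m * dot u u <= dot u (B *m u)) ->
  m <= lam r.
Proof.
move=> B_sym [charB lam_sorted] r_lt_S S_ge; rewrite leNgt; apply/negP => lam_lt.
have card_le : (#|[pred i : 'I_n | (m <= lam i)%R]| <= r)%N.
  apply: leq_trans (card_ord_lt_le n r); apply/subset_leq_card/subsetP => i.
  rewrite !inE; apply: contraTT; rewrite -leqNgt -ltNge => le_ri.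
  exact: le_lt_trans (lam_sorted _ _ le_ri (ltn_ord i)) lam_lt.
have := leq_trans (mxrank_le_card_eigenvalues_ge B_sym charB S_ge) card_le.
by rewrite leqNgt r_lt_S.
Qed.

Section SecondMoment.
Variables (R : rcfType) (d k : nat) (w : 'I_k -> R) (mu : 'I_k -> 'cV[R]_d).

Lemma second_moment_sym : (second_moment w mu)^T = second_moment w mu.
Proof.
rewrite /second_moment linear_sum; apply: eq_bigr => j _.
by rewrite linearZ /= trmx_mul trmxK.
Qed.

Lemma dot_second_moment u :
  dot u (second_moment w mu *m u) = \sum_l w l * dot u (mu l) ^+ 2.
Proof.
rewrite /second_moment mulmx_suml /dot mulmx_sumr summxE; apply: eq_bigr => l _.
rewrite -scalemxAl -scalemxAr mxE; congr (_ * _).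
rewrite !mulmxA -mulmxA [LHS]mxE big_ord1 expr2; congr (_ * _).
by rewrite -[(mu l)^T *m u]trmxK trmx_mul trmxK [LHS]mxE.
Qed.

End SecondMoment.

Section OrthonormalBasis.
Variables (R : rcfType) (d : nat) (Q : 'M[R]_d).
Hypothesis QtQ : Q^T *m Q = 1%:M.

Lemma dot_orthomx (a b : 'cV[R]_d) : dot (Q *m a) (Q *m b) = dot a b.
Proof. by rewrite /dot trmx_mul -mulmxA [Q^T *m _]mulmxA QtQ mul1mx. Qed.

Lemma sum_col_proj r :
  \sum_(i < d | (i < r)%N) col i Q *m (col i Q)^T = Q *m pid_mx r *m Q^T.
Proof.
apply/matrixP => a b; rewrite summxE pid_mx_diag !mxE big_mkcond /=.
apply: eq_bigr => i _; rewrite mul_mx_diag !mxE big_ord1 !mxE.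
by case: (i < r)%N; rewrite ?mulr1 ?mulr0 ?mul0r.
Qed.

Variables (B : 'M[R]_d) (lam : nat -> R).
Hypothesis Q_eig : forall i : 'I_d, B *m col i Q = lam i *: col i Q.

Lemma dot_eigenbasis (a : 'cV[R]_d) :
  dot (Q *m a) (B *m (Q *m a)) = \sum_(i < d) lam i * a i 0 ^+ 2.
Proof.
have BQ : B *m Q = Q *m diag_mx (\row_i lam i).
  apply/matrixP => x i; rewrite mul_mx_diag !mxE mulrC.
  have /matrixP/(_ x 0) := Q_eig i; rewrite !mxE => <-.
  by apply: eq_bigr => l _; rewrite !mxE.
rewrite mulmxA BQ -mulmxA dot_orthomx dotE; apply: eq_bigr => i _.
by rewrite mul_diag_mx !mxE; ring.
Qed.

End OrthonormalBasis.

Lemma weyl_eigenvalue_le (R : rcfType) d (A B Q : 'M[R]_d) (lam lam' : nat -> R) s r :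
  A^T = A -> eigenvalues_sorted A lam ->
  Q^T *m Q = 1%:M -> (forall i : 'I_d, B *m col i Q = lam' i *: col i Q) ->
  (forall i j : 'I_d, (i <= j)%N -> lam' j <= lam' i) ->
  spectral_norm_is (A - B) s -> (r < d)%N -> lam' r - s <= lam r.
Proof.
move=> A_sym A_eig QtQ Q_eig lam'_sorted s_norm lt_rd.
have Q_unit : Q \in unitmx by case: (mulmx1_unit QtQ).
apply: (courant_fischer_lb A_sym A_eig (S := pid_mx r.+1 *m Q^T : 'M_d)).
  by rewrite mxrankMfree ?row_free_unit ?unitmx_tr // rank_pid_mx.
move=> u /submxP [e uE]; pose c : 'cV_d := pid_mx r.+1 *m e^T.
have -> : u = Q *m c by rewrite /c -[u]trmxK uE !trmx_mul trmxK tr_pid_mx mulmxA.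
have c_top (i : 'I_d) : (r < i)%N -> c i 0 = 0.
  by move=> lt_ri; rewrite /c pid_mx_diag mul_diag_mx !mxE ltnS leqNgt lt_ri mul0r.
have B_ge : lam' r * dot c c <= dot (Q *m c) (B *m (Q *m c)).
  rewrite (dot_eigenbasis QtQ Q_eig) dotE mulr_sumr; apply: ler_sum => i _.
  have [lt_ri|le_ir] := ltnP r i; first by rewrite c_top // expr0n /= !(mul0r, mulr0).
  by rewrite -expr2 ler_wpM2r ?sqr_ge0 // (lam'_sorted i (Ordinal lt_rd) le_ir).
have := normr_dot_mulmx_le (Q *m c) s_norm; rewrite ler_norml => /andP [E_ge _].
move: E_ge; rewrite mulmxBl dotBr dot_orthomx // mulrBl; lra.
Qed.

Lemma W2sq_le_identity_coupling (R : rcfType) d k (w : 'I_k -> R)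
    (a b : 'I_k -> 'cV[R]_d) W :
  (forall j, 0 <= w j) -> W2sq_is w a w b W ->
  W <= \sum_j w j * vnorm (a j - b j) ^+ 2.
Proof.
move=> w_ge0 [W_lb _]; apply: W_lb.
have diagE j (F : 'I_k -> R) : \sum_(l < k) (if j == l then F l else 0) = F j.
  by rewrite (bigD1 j) //= eqxx big1 ?addr0 // => l; rewrite eq_sym => /negbTE ->.
exists (fun i j => if i == j then w i else 0); split.
  split; first by move=> i j; case: eqP.
  split=> x; apply: eq_bigr => j _; first exact: (diagE j (fun=> w j)).
  by under eq_bigr do rewrite eq_sym; exact: (diagE j w).
apply: eq_bigr => i _; rewrite -(diagE i (fun l => w i * vnorm (a i - b l) ^+ 2)).
by apply: eq_bigr => l _; case: eqP => [<-|]; rewrite ?mul0r.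
Qed.

Section ProjectionResidual.
Variables (R : rcfType) (d k r : nat) (w : 'I_k -> R) (mu : 'I_k -> 'cV[R]_d).
Variables (Sigma' Q : 'M[R]_d) (lam lam' : nat -> R) (s : R).
Hypotheses (w_ge0 : forall j, 0 <= w j)
  (Sigma_eig : eigenvalues_sorted (second_moment w mu) lam)
  (QtQ : Q^T *m Q = 1%:M)
  (Q_eig : forall i : 'I_d, Sigma' *m col i Q = lam' i *: col i Q)
  (lam'_sorted : forall i j : 'I_d, (i <= j)%N -> lam' j <= lam' i)
  (s_norm : spectral_norm_is (second_moment w mu - Sigma') s).

Local Notation Sigma := (second_moment w mu).

Lemma lam_next_second_moment_ge0 : 0 <= lam_next d lam r + 2 * s.
Proof.
have s_ge0 := spectral_norm_ge0 s_norm.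
rewrite /lam_next; case: ifP => [lt_rd|_]; last by rewrite add0r mulr_ge0.
rewrite addr_ge0 ?mulr_ge0 //.
apply: (courant_fischer_lb (second_moment_sym w mu) Sigma_eig (S := 1%:M)).
  by rewrite mxrank1.
move=> u _; rewrite mul0r dot_second_moment sumr_ge0 // => l _.
by rewrite mulr_ge0 ?sqr_ge0.
Qed.

Lemma weighted_residual_le j :
  w j * vnorm (mu j - Q *m pid_mx r *m Q^T *m mu j) ^+ 2 <= lam_next d lam r + 2 * s.
Proof.
pose c := copid_mx r *m (Q^T *m mu j).
have c_low (i : 'I_d) : (i < r)%N -> c i 0 = 0.
  by move=> lt_ir; rewrite /c copid_mx_diag mul_diag_mx !mxE leqNgt lt_ir mul0r.
have -> : mu j - Q *m pid_mx r *m Q^T *m mu j = Q *m c.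
  by rewrite /c /copid_mx mulmxBl mul1mx mulmxBr !mulmxA (mulmx1C QtQ) mul1mx.
rewrite vnorm_sqr dot_orthomx //; set a := dot c c.
have [a0|a_neq0] := eqVneq a 0; first by rewrite a0 mulr0 lam_next_second_moment_ge0.
have a_gt0 : 0 < a by rewrite lt_def a_neq0 dot_ge0.
have lt_rd : (r < d)%N.
  rewrite ltnNge; apply: contra a_neq0 => le_dr; rewrite /a dot_eq0; apply/eqP/matrixP.
  by move=> i l; rewrite ord1 [RHS]mxE c_low // (leq_trans (ltn_ord i)).
rewrite /lam_next lt_rd -(ler_pM2r a_gt0) -mulrA -expr2.
have c_mu : dot (Q *m c) (mu j) = a.
  rewrite -[mu j]mul1mx -(mulmx1C QtQ) -mulmxA dot_orthomx // /a !dotE.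
  apply: eq_bigr => i _; rewrite /c copid_mx_diag !mul_diag_mx !mxE.
  by case: leqP; rewrite ?mul0r ?mul1r.
have Sigma_ge : w j * a ^+ 2 <= dot (Q *m c) (Sigma *m (Q *m c)).
  rewrite dot_second_moment (bigD1 j) //= c_mu ler_wpDr // sumr_ge0 // => l _.
  by rewrite mulr_ge0 ?sqr_ge0.
have Sigma'_le : dot (Q *m c) (Sigma' *m (Q *m c)) <= lam' r * a.
  rewrite (dot_eigenbasis QtQ Q_eig) /a dotE mulr_sumr; apply: ler_sum => i _.
  have [lt_ir|le_ri] := ltnP i r; first by rewrite c_low // expr0n /= !(mul0r, mulr0).
  by rewrite -expr2 ler_wpM2r ?sqr_ge0 // (@lam'_sorted (Ordinal lt_rd) i le_ri).
have := normr_dot_mulmx_le (Q *m c) s_norm.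
rewrite dot_orthomx // -/a ler_norml mulmxBl dotBr => /andP [_ E_le].
have weyl := weyl_eigenvalue_le (second_moment_sym w mu) Sigma_eig QtQ Q_eig
  lam'_sorted s_norm lt_rd.
have : lam' r * a <= (lam r + s) * a by rewrite ler_wpM2r ?(ltW a_gt0) //; lra.
lra.
Qed.

End ProjectionResidual.

Theorem mainTheorem5 (R : rcfType) (d k r : nat)
  (w : 'I_k -> R) (mu : 'I_k -> 'cV[R]_d)
  (Sigma' P : 'M[R]_d) (lam : nat -> R) (s W : R) :
  (forall j, 0 <= w j) ->
  \sum_(j < k) w j = 1 ->
  (r <= d)%N ->
  Sigma'^T = Sigma' ->
  eigenvalues_sorted (second_moment w mu) lam ->
  top_eig_proj Sigma' r P ->
  spectral_norm_is (second_moment w mu - Sigma') s ->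
  W2sq_is w mu w (push_atoms P mu) W ->
  W <= k%:R * (lam_next d lam r + 2 * s).
Proof.
move=> w_ge0 _ _ _ Sigma_eig [Q [lam' [QtQ [Q_eig [lam'_sorted ->]]]]] s_norm W_inf.
apply: le_trans (W2sq_le_identity_coupling w_ge0 W_inf) _.
rewrite /push_atoms sum_col_proj -[k in k%:R]card_ord mulr_natl -sumr_const.
apply: ler_sum => j _.
exact: weighted_residual_le.
Qed.
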